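(* Let $A=(A_1,A_2)\in\mathbb{N}_0^2$, $u_0\in\mathbb{R}\setminus\{0\}$, $l$ an even natural number, and let $p,\bar p$ be real polynomials in $(x,y)$ with $p(x,y)=(y^{A_1}-u_0x^{A_2})^l\,\bar p(x,y)$ and $\bar p(0,0)=0$. Then $(0,0)$ is a point of local minimum of $p$ if and only if it is a point of local minimum of $\bar p$.
   Context: $\mathbb{N}=\{1,2,\dots\}$; $\mathbb{N}_0^2$ is the set of $(A_1,A_2)\in\mathbb{N}^2$ with $\gcd(A_1,A_2)=1$. A point of local minimum of $f$ at $(0,0)$ means $f(x,y)\ge f(0,0)$ for all $(x,y)$ in some neighborhood of $(0,0)$. *)

From HB Require Import structures.
From mathcomp Require Import all_boot all_order all_algebra.
From mathcomp Require Import reals.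
Set Implicit Arguments. Unset Strict Implicit. Unset Printing Implicit Defensive.
Import Order.TTheory GRing.Theory Num.Theory.
Local Open Scope ring_scope.

(* Real bivariate polynomials in (x,y) are represented as {poly {poly R}}:
   the outer variable is y, the inner variable (coefficients) is x. *)

Definition eval2 (R : realType) (P : {poly {poly R}}) (x y : R) : R :=
  (P.[y%:P]).[x].

Definition polyx (R : realType) : {poly {poly R}} := ('X)%:P.
Definition polyy (R : realType) : {poly {poly R}} := 'X.

(* (0,0) is a point of local minimum of f: f(x,y) >= f(0,0) on a
   neighbourhood of (0,0) (square neighbourhoods form a basis). *)
Definition local_min_at_origin (R : realType) (f : R -> R -> R) : Prop :=
  exists e : R, 0 < e /\
    forall x y : R, `|x| < e -> `|y| < e -> f 0 0 <= f x y.

From HB Require Import structures.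
From mathcomp Require Import all_boot all_order all_algebra.
From mathcomp Require Import reals.
From mathcomp Require Import classical_sets topology normedtype derive.
Import Order.TTheory GRing.Theory Num.Theory.
Import numFieldNormedType.Exports.
Local Open Scope ring_scope.

(** Writing p = q^l pbar with q = y^A1 - u0 x^A2, the implication from pbar to
p is immediate since q^l >= 0.  Conversely, fix x; where the polynomial
y |-> q(x, y) does not vanish, q^l > 0 and p >= 0 forces pbar >= 0.  This
polynomial is monic in y, so its zeros are isolated and pbar(x, _) >= 0 extends
to them by continuity. *)

Section RealPolynomials.
Variable R : realType.

Lemma poly_eq0_near (g : {poly R}) (y0 : R) :
  (\forall y \near y0, root g y) -> g = 0.
Proof.
move=> /nbhs_ballP[d d_gt0 ball_root].
pose rs := mkseq (fun i => y0 + d / i.+2%:R) (size g).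
apply: (@roots_geq_poly_eq0 _ _ rs); last by rewrite size_mkseq.
- apply/allP => _ /mapP[i _ ->]; apply: ball_root.
  rewrite /ball /= opprD addNKr normrN ger0_norm ?divr_ge0 ?ltW //.
  by rewrite ltr_pdivrMr // ltr_pMr // ltr1n.
- apply: mkseq_uniq => i j /addrI /(mulfI (lt0r_neq0 d_gt0)) /invr_inj.
  by move/eqP; rewrite eqr_nat => /eqP [].
Qed.

Lemma ge0_of_mul_even_pow (D : set R) (f : R -> R) (g : {poly R}) (l : nat) :
  open D -> continuous f -> g != 0 -> ~~ odd l ->
  (forall y, D y -> 0 <= g.[y] ^+ l * f y) -> forall y, D y -> 0 <= f y.
Proof.
move=> D_open f_cont g_neq0 l_even gf_ge0 y0 D_y0; rewrite leNgt; apply/negP => f_lt0.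
apply/negP: g_neq0; rewrite negbK; apply/eqP/(@poly_eq0_near _ y0).
near=> y; have /gf_ge0 : D y by near: y; exact: open_nbhs_nbhs.
apply: contraLR => g_y.
rewrite -ltNge pmulr_rlt0 ?exprn_even_gt0 ?g_y ?orbT //.
by near: y; apply: cvgr_lt f_lt0; exact: f_cont.
Unshelve. all: by end_near.
Qed.

Lemma eval2_map_horner (P : {poly {poly R}}) (x y : R) :
  eval2 P x y = (map_poly (horner_eval x) P).[y].
Proof.
have -> : y = horner_eval x y%:P by rewrite /horner_eval hornerC.
by rewrite horner_map /eval2 /horner_eval hornerC.
Qed.

End RealPolynomials.

Theorem mainTheorem14 (R : realType) (A1 A2 : nat) (u0 : R) (l : nat)
    (p pbar : {poly {poly R}}) :
  (0 < A1)%N -> (0 < A2)%N -> coprime A1 A2 ->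
  u0 != 0 ->
  (0 < l)%N -> ~~ odd l ->
  p = (polyy R ^+ A1 - u0%:P%:P * polyx R ^+ A2) ^+ l * pbar ->
  eval2 pbar 0 0 = 0 ->
  (local_min_at_origin (eval2 p) <-> local_min_at_origin (eval2 pbar)).
Proof.
move=> A1_gt0 _ _ _ _ l_even -> pbar00.
pose q (x : R) : {poly R} := 'X^A1 - (u0 * x ^+ A2)%:P.
have eval_p x y : eval2 ((polyy R ^+ A1 - u0%:P%:P * polyx R ^+ A2) ^+ l * pbar) x y
    = (q x).[y] ^+ l * eval2 pbar x y.
  by rewrite /eval2 /polyy /polyx /q !hornerE.
split=> -[e [e_gt0 min_e]]; exists e; split=> // x y x_lt y_lt.
- rewrite pbar00 eval2_map_horner.
  apply: (@ge0_of_mul_even_pow _ (ball 0 e) _ (q x) l) => //.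
  + exact: ball_open.
  + exact: continuous_horner.
  + by rewrite monic_neq0 // monicXnsubC.
  + move=> z; rewrite /ball /= sub0r normrN => z_lt.
    rewrite -eval2_map_horner.
    have := min_e x z x_lt z_lt; rewrite !eval_p pbar00 mulr0; exact.
  + by rewrite /ball /= sub0r normrN.
- rewrite !eval_p pbar00 mulr0 mulr_ge0 ?exprn_even_ge0 //.
  by rewrite -pbar00 min_e.
Qed.
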